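(* Let $\varepsilon>0$ be fixed, let $d$ be a sufficiently large constant (depending on $\varepsilon$), and let $q\ge(2+\varepsilon)d$ and $0\le\beta<1$ be constants. Let $G=(V,E)\sim\mathcal{G}(n,d/n)$. There exists a constant $C>0$ such that with probability $1-O(1/n)$, for every $\ell\ge0$ and every path $P$ in $G$ with $\ell$ edges, $|B(P)|\le C(\ell+\log n)$.
   Context: $\mathcal{G}(n,p)$ is the Erdős–Rényi random graph on $n$ vertices with each edge present independently with probability $p$. A vertex $u$ of $G$ is low-degree if $\deg_G(u)<\frac{q-1}{1-\beta}-2$, high-degree otherwise. For $B\subseteq V$, $\partial B=\{u\in V\setminus B:\exists w\in B,uw\in E\}$. A set $B\subseteq V$ is a permissive block if every vertex of $\partial B$ is low-degree; $B(P)$ denotes the minimal permissive block containing the vertex set of $P$. *)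

From Stdlib Require Import Reals ClassicalEpsilon.
From HB Require Import structures.
From mathcomp Require Import all_boot.
Local Open Scope R_scope.

Set Implicit Arguments.
Unset Strict Implicit.
Unset Printing Implicit Defensive.

(* Vertex set V = 'I_n. A graph is encoded by its edge set E, a set of pairs
   (i,j) with i < j (each unordered edge stored once). *)
Definition upairs (n : nat) : {set 'I_n * 'I_n} := [set e : 'I_n * 'I_n | (nat_of_ord e.1 < nat_of_ord e.2)%N].

Definition adj (n : nat) (E : {set 'I_n * 'I_n}) : rel 'I_n :=
  fun u w => ((u, w) \in E) || ((w, u) \in E).

Definition deg (n : nat) (E : {set 'I_n * 'I_n}) (u : 'I_n) : nat :=
  #|[set w | adj E u w]|.

Definition low_degree (n q : nat) (beta : R) (E : {set 'I_n * 'I_n}) (u : 'I_n) : Prop :=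
  (INR (deg E u) < (INR q - 1) / (1 - beta) - 2).

Definition boundary (n : nat) (E : {set 'I_n * 'I_n}) (B : {set 'I_n}) : {set 'I_n} :=
  [set u | (u \notin B) && [exists w, (w \in B) && adj E u w]].

Definition permissive_block (n q : nat) (beta : R) (E : {set 'I_n * 'I_n})
    (B : {set 'I_n}) : Prop :=
  forall u, u \in boundary E B -> low_degree q beta E u.

Definition min_permissive_block (n q : nat) (beta : R) (E : {set 'I_n * 'I_n})
    (S B : {set 'I_n}) : Prop :=
  [/\ permissive_block q beta E B, S \subset B &
      forall B', permissive_block q beta E B' -> S \subset B' -> B' \subset B -> B' = B].

Definition gnp_weight (n : nat) (p : R) (E : {set 'I_n * 'I_n}) : R :=
  (p ^ #|E| * (1 - p) ^ (#|upairs n| - #|E|)).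

Definition gnp_prob (n : nat) (p : R) (A : {set 'I_n * 'I_n} -> Prop) : R :=
  \big[Rplus/0]_(E : {set 'I_n * 'I_n} | E \subset upairs n)
     (if excluded_middle_informative (A E) then gnp_weight p E else 0).

(* The good event: for every path P = x :: s (distinct vertices, consecutive
   ones adjacent) with l = size s edges, every minimal permissive block B(P)
   containing V(P) has |B(P)| <= C (l + log n). *)
Definition good_event (n q : nat) (beta C : R) (E : {set 'I_n * 'I_n}) : Prop :=
  forall (x : 'I_n) (s : seq 'I_n), uniq (x :: s) -> path (adj E) x s ->
  forall B : {set 'I_n},
    min_permissive_block q beta E [set y | y \in x :: s] B ->
    (INR #|B| <= C * (INR (size s) + ln (INR n))).

From Stdlib Require Import Reals ClassicalEpsilon.
From HB Require Import structures.
From mathcomp Require Import all_boot.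
From Stdlib Require Import Lra.
From mathcomp Require Import ssralg ssrnum Rstruct.
Import GRing.Theory Num.Theory.

(* If a path [P] with [l] edges has a minimal permissive block [B] with
   [|B| > C (l + log n)], then [B] is a witness of a rare event.  Every vertex
   of [B] outside [P] has high degree (removing a low-degree one would leave a
   smaller permissive block), and [B] is connected through [P] (a proper part
   containing [P] left by no edge would be permissive), so [B] spans a set [F]
   of [|B| - 1] edges and has at least [|B| - l - 1] high-degree vertices.  As
   [q >= (2 + eps) d], the degree sum of [B] is then at least [A d |B|] for a
   constant [A > 2].  Markov's inequality for the weight [t ^ (degree sum of B)
   / t ^ (A d |B|)], summed over all candidate pairs [(B, F)], bounds the
   probability of a witness: each vertex of [B] contributes the factor
   [e^2 d t^2 exp (- (A ln t - (t^2 - 1)) d)], which is below [e^-3] for a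
   suitable [t > 1] once [d] is large, and the sizes [|B| >= log n] sum to
   [O(1/n)]. *)

Set Implicit Arguments.
Unset Strict Implicit.
Unset Printing Implicit Defensive.

Local Notation graph n := {set 'I_n * 'I_n}.

(** * Minimal permissive blocks *)

Section Blocks.
Variables (n : nat) (E : graph n).

Lemma adjC u w : adj E u w = adj E w u.
Proof. by rewrite /adj orbC. Qed.

Definition induced_edges (A : {set 'I_n}) :=
  [set e in E | (e.1 \in A) && (e.2 \in A)].

Lemma induced_edges_sub (A : {set 'I_n}) : induced_edges A \subset E.
Proof. by apply/subsetP=> e; rewrite inE => /andP []. Qed.

Definition connected_from (x : 'I_n) (B : {set 'I_n}) :=
  forall A : {set 'I_n}, x \in A -> A \proper B ->
  exists u w, [/\ u \in A, w \in B :\: A & adj E u w].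

Variables (q : nat) (beta : R).

Lemma minblock_outside_high S B v :
  min_permissive_block q beta E S B -> v \in B -> v \notin S ->
  ~ low_degree q beta E v.
Proof.
case=> blockB SB minB vB vS lowv.
have blockBv : permissive_block q beta E (B :\ v).
  move=> u; rewrite inE => /andP [uBv /existsP [w /andP [wBv uw]]].
  have [-> // | uv] := eqVneq u v.
  apply: blockB; rewrite !inE; apply/andP; split.
    by move: uBv; rewrite !inE uv.
  by apply/existsP; exists w; rewrite uw andbT; move: wBv; rewrite inE => /andP [].
have SBv : S \subset B :\ v.
  apply/subsetP=> y yS; rewrite !inE (subsetP SB _ yS) andbT.
  by apply: contraNneq vS => <-.
by move: vB; rewrite -(minB _ blockBv SBv (subsetDl _ _)) !inE eqxx.
Qed.

Lemma minblock_edge_out S B (A : {set 'I_n}) :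
  min_permissive_block q beta E S B -> S \subset A -> A \proper B ->
  exists u w, [/\ u \in A, w \in B :\: A & adj E u w].
Proof.
case=> blockB SB minB SA ltAB; have AB := proper_sub ltAB.
apply: NNPP => noedge.
have blockA : permissive_block q beta E A.
  move=> u; rewrite inE => /andP [uA /existsP [w /andP [wA uw]]].
  case uB: (u \in B).
    by case: noedge; exists w, u; rewrite !inE uB uA adjC.
  by apply: blockB; rewrite inE uB; apply/existsP; exists w; rewrite uw (subsetP AB).
by move: ltAB; rewrite (minB _ blockA SA AB) properxx.
Qed.

Lemma path_edge_out (A : {set 'I_n}) x s y :
  path (adj E) x s -> x \in A -> y \in s -> y \notin A ->
  exists u w, [/\ u \in A, w \in x :: s, w \notin A & adj E u w].
Proof.
elim: s x => [//|z s IH] x /= /andP [xz zs] xA.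
case zA: (z \in A); last by exists x, z; rewrite !inE eqxx orbT zA.
rewrite inE => /predU1P [-> | ys]; first by rewrite zA.
move=> /(IH z zs zA ys) [u [w [uA ws wA uw]]].
by exists u, w; rewrite inE ws orbT.
Qed.

Lemma minblock_path_connected x s B :
  path (adj E) x s ->
  min_permissive_block q beta E [set y | y \in x :: s] B -> connected_from x B.
Proof.
move=> xs minB A xA ltAB; have [_ SB _] := minB.
have [SA | /subsetPn [y]] := boolP ([set y | y \in x :: s] \subset A).
  exact: minblock_edge_out minB SA ltAB.
rewrite inE => /predU1P [-> | ys] yA; first by rewrite xA in yA.
have [u [w [uA ws wA uw]]] := path_edge_out xs xA ys yA.
by exists u, w; rewrite inE wA (subsetP SB) // inE.
Qed.

Lemma card_induced_edges_add (A : {set 'I_n}) u w :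
  u \in A -> w \notin A -> adj E u w ->
  #|induced_edges A| < #|induced_edges (w |: A)|.
Proof.
move=> uA wA uw.
have [e [eE ew eA]] : exists e, [/\ e \in E, (e.1 \in w |: A) && (e.2 \in w |: A)
                                  & e \notin induced_edges A].
  case/orP: uw => [uwE | wuE]; [exists (u, w) | exists (w, u)];
    by rewrite !inE ?uwE ?wuE uA eqxx ?orbT (negbTE wA) ?andbF.
have sub : e |: induced_edges A \subset induced_edges (w |: A).
  rewrite subUset sub1set inE eE ew /=.
  apply/subsetP=> f; rewrite !inE => /andP [-> /andP [-> ->]].
  by rewrite !orbT.
by apply: leq_trans (subset_leq_card sub); rewrite cardsU1 eA.
Qed.

Lemma connected_card_induced_edges x (B : {set 'I_n}) :
  x \in B -> connected_from x B -> #|B| <= #|induced_edges B|.+1.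
Proof.
move=> xB conB.
suff grow k : k < #|B| -> exists A : {set 'I_n},
    [/\ x \in A, A \subset B, #|A| = k.+1 & k <= #|induced_edges A|].
  have B0 : 0 < #|B| by apply/card_gt0P; exists x.
  have := grow #|B|.-1; rewrite ltn_predL B0 => /(_ isT) [A [_ AB cardA leA]].
  have eqAB : A = B by apply/eqP; rewrite eqEcard AB cardA prednK // leqnn.
  by rewrite -eqAB cardA ltnS.
elim: k => [_ | k IH ltkB].
  by exists [set x]; rewrite set11 sub1set xB cards1.
have [A [xA AB cardA leA]] := IH (ltnW ltkB).
have ltAB : A \proper B by rewrite properEcard AB cardA.
have [u [w [uA /setDP [wB wA] uw]]] := conB A xA ltAB.
exists (w |: A); rewrite !inE xA orbT subUset sub1set wB AB cardsU1 wA cardA.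
by split=> //; apply: leq_trans (card_induced_edges_add uA wA uw).
Qed.

End Blocks.

Definition ends_in n (B : {set 'I_n}) (e : 'I_n * 'I_n) : nat :=
  (e.1 \in B) + (e.2 \in B).

Section Degrees.
Variables (n : nat) (E : graph n).
Hypothesis EU : E \subset upairs n.

Lemma upairs_neq e : e \in upairs n -> e.1 != e.2.
Proof. by rewrite inE; apply: contraTneq => ->; rewrite ltnn. Qed.

Lemma deg_incident v : deg E v = \sum_(e in E) ((e.1 == v) + (e.2 == v)).
Proof.
pose orient (w : 'I_n) := if v < w then (v, w) else (w, v).
have orient_inj : injective orient.
  by move=> w w'; rewrite /orient; do 2 case: ltnP => ?; case=> //; congruence.
have -> : \sum_(e in E) ((e.1 == v) + (e.2 == v))
          = #|[set e in E | (e.1 == v) || (e.2 == v)]|.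
  rewrite -sum1dep_card big_mkcond [RHS]big_mkcond; apply: eq_bigr => e _ /=.
  case eE: (e \in E) => //=; case: (eqVneq e.1 v) => [<- | _] /=; last by case: eqP.
  by rewrite eq_sym (negbTE (upairs_neq (subsetP EU _ eE))).
rewrite /deg -(card_imset _ orient_inj); apply: eq_card => e.
rewrite [RHS]inE; apply/imsetP/idP => [[w] | ].
  rewrite inE /adj /orient => /orP [] wE ->;
    have := subsetP EU _ wE; rewrite inE /= => ltw.
    by rewrite ltw wE eqxx.
  by rewrite ltnNge (ltnW ltw) wE eqxx orbT.
case: e => a b /andP [abE /orP [] /eqP /= endv];
  have := subsetP EU _ abE; rewrite inE /= => ltab.
  by exists b; rewrite ?inE /adj /orient -endv ?ltab ?abE.
by exists a; rewrite ?inE /adj /orient -endv ?ltnNge ?(ltnW ltab) ?abE ?orbT.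
Qed.

Lemma sum_deg (B : {set 'I_n}) :
  \sum_(v in B) deg E v = \sum_(e in E) ends_in B e.
Proof.
have sum_eq1 (a : 'I_n) : \sum_(v in B) (a == v) = (a \in B).
  case: (boolP (a \in B)) => aB; last first.
    by rewrite big1 // => v vB; apply/eqP; rewrite eqb0; apply: contraNneq aB => ->.
  rewrite (bigD1 a) //= eqxx big1 // => v /andP [_ va].
  by rewrite eq_sym (negbTE va).
under eq_bigr => v _ do rewrite deg_incident.
rewrite exchange_big; apply: eq_bigr => e _.
by rewrite big_split /= !sum_eq1.
Qed.

End Degrees.

Local Open Scope R_scope.

Definition deg_threshold (q : nat) (beta : R) := (INR q - 1) / (1 - beta) - 2.

Definition high_degree n q beta (E : graph n) (v : 'I_n) :=
  Rleb (deg_threshold q beta) (INR (deg E v)).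

Lemma bad_event_witness n q beta C (E : graph n) :
  ~ good_event q beta C E ->
  exists (B : {set 'I_n}) (F : graph n) (l : nat),
    [/\ F \subset induced_edges E B, #|F| = (#|B| - 1)%N,
        C * (INR l + ln (INR n)) < INR #|B| &
        (#|B| <= l.+1 + #|[set v in B | high_degree q beta E v]|)%N].
Proof.
move=> bad.
have [x [s [B [xs minB ltB]]]] : exists x s B, [/\ path (adj E) x s,
    min_permissive_block q beta E [set y | y \in x :: s] B
    & C * (INR (size s) + ln (INR n)) < INR #|B|].
  apply: NNPP => none; apply: bad => x s _ xs B minB.
  by apply: Rnot_lt_le => ltB; apply: none; exists x, s, B.
have [_ SB _] := minB.
have xB : x \in B by rewrite (subsetP SB) // inE mem_head.
have [F] : exists F, F \in [set F : graph n |
                         F \subset induced_edges E B & #|F| == (#|B| - 1)%N].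
  apply/card_gt0P; rewrite cards_draws bin_gt0 leq_subLR add1n.
  exact: connected_card_induced_edges xB (minblock_path_connected xs minB).
rewrite inE => /andP [FB /eqP cardF].
exists B, F, (size s); split=> //.
have sub : B \subset [set y | y \in x :: s] :|: [set v in B | high_degree q beta E v].
  apply/subsetP=> v vB; apply/setUP.
  have [vxs | vxs] := boolP (v \in x :: s); [by left; rewrite inE | right].
  rewrite inE vB; apply/RlebP/Rnot_lt_le; apply: (minblock_outside_high minB vB).
  by rewrite inE.
apply: leq_trans (subset_leq_card sub) _; apply: leq_trans (leq_card_setU _ _) _.
by rewrite leq_add2r cardsE card_size.
Qed.

(** * Real estimates and finite sums *)

Lemma exp_le_exp x y : x <= y -> exp x <= exp y.
Proof. by case=> [/exp_increasing/Rlt_le | ->]; [| apply: Rle_refl]. Qed.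

Lemma exp_pow x k : exp x ^ k = exp (INR k * x).
Proof.
elim: k => [|k IH]; first by rewrite /= Rmult_0_l exp_0.
by rewrite -[exp x ^ k.+1]/(exp x * exp x ^ k) IH -exp_plus S_INR; congr exp; ring.
Qed.

Lemma pow_le_exp x N : 0 <= 1 + x -> (1 + x) ^ N <= exp (INR N * x).
Proof. by move=> x1; rewrite -exp_pow; apply: pow_incr; split=> //; apply: exp_ineq1_le. Qed.

Lemma ln_lower_bound x : 0 < x -> x - 1 <= x * ln x.
Proof.
move=> x0; have := exp_ineq1_le (- ln x); rewrite exp_Ropp exp_ln //.
move=> h; have : x * (1 + - ln x) <= x * / x by apply: Rmult_le_compat_l; lra.
by rewrite Rinv_r; lra.
Qed.

Lemma ln_ge1 n : (3 <= n)%N -> 1 <= ln (INR n).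
Proof.
move=> n3; have en : exp 1 <= INR n.
  by have := le_INR 3 n (elimT leP n3); have := exp_le_3; rewrite [INR 3]/=; lra.
rewrite -(ln_exp 1); case: (Rle_lt_or_eq_dec _ _ en) => [lt_en | <-]; last exact: Rle_refl.
by apply/Rlt_le/ln_increasing => //; apply: exp_pos.
Qed.

Lemma INR_binomial_le N k : INR 'C(N, k) * INR k`! <= INR N ^ k.
Proof.
rewrite !INRE RpowE -natrX RmultE -natrM bin_ffact; apply/RleP; rewrite ler_nat.
elim: k N => [|k IH] N; first by rewrite ffactn0 expn0.
rewrite ffactnS expnS leq_mul2l; case: N => [//|N] /=.
by apply: leq_trans (IH N) _; case: k {IH} => // k; rewrite leq_exp2r.
Qed.

Lemma succ_pow_le_exp m : INR m.+1 ^ m <= exp 1 * INR m ^ m.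
Proof.
case: m => [|m]; first by rewrite /= Rmult_1_r; have := exp_ineq1_le 1; lra.
set M := INR m.+1; have M0 : 0 < M by apply: lt_0_INR; apply/ltP.
have -> : INR m.+2 = M * (1 + / M) by rewrite S_INR -/M; field; lra.
rewrite Rpow_mult_distr Rmult_comm; apply: Rmult_le_compat_r; first by apply: pow_le; lra.
have -> : exp 1 = exp (INR m.+1 * / M) by congr exp; rewrite -/M; field; lra.
by apply: pow_le_exp; have := Rinv_0_lt_compat _ M0; lra.
Qed.

Lemma pow_self_le_exp_fact m : INR m ^ m <= exp (INR m) * INR m`!.
Proof.
elim: m => [|m IH]; first by rewrite /= exp_0; lra.
rewrite factS mult_INR -[INR m.+1 ^ m.+1]/(INR m.+1 * INR m.+1 ^ m) S_INR exp_plus -S_INR.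
have : exp 1 * INR m ^ m <= exp 1 * (exp (INR m) * INR m`!).
  by apply: Rmult_le_compat_l => //; apply/Rlt_le/exp_pos.
have := succ_pow_le_exp m; have := pos_INR m.+1; nra.
Qed.

Lemma binomial_pair_le n k :
  INR 'C(n, k.+1) * INR 'C(k.+1 * k.+1, k) <= (INR n * exp 2) ^ k.+1.
Proof.
set a := INR 'C(n, k.+1); set b := INR 'C(k.+1 * k.+1, k).
set F0 := INR k`!; set F1 := INR k.+1`!; set E := exp (INR k.+1).
set M := INR k.+1 ^ k.
have F0p : 0 < F0 by apply/lt_0_INR/ltP/fact_gt0.
have F01 : F0 <= F1 by rewrite /F1 factS mult_INR -/F0 S_INR; have := pos_INR k; nra.
have [a0 b0 M0] : [/\ 0 <= a, 0 <= b & 0 <= M] by split; [exact: pos_INR.. | apply/pow_le/pos_INR].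
have E0 : 0 < E by apply: exp_pos.
have aF1 : a * F1 <= INR n ^ k.+1 by apply: INR_binomial_le.
have bF0 : b * F0 <= M * M.
  by rewrite -Rpow_mult_distr -mult_INR; apply: INR_binomial_le.
have ME : M <= E * F0.
  apply: Rle_trans (succ_pow_le_exp k) _; rewrite /E S_INR exp_plus.
  have := pow_self_le_exp_fact k; have := exp_pos 1; rewrite -/F0; nra.
have -> : (INR n * exp 2) ^ k.+1 = INR n ^ k.+1 * E ^ 2.
  by rewrite Rpow_mult_distr !exp_pow [INR 2]/=; congr (_ * exp _); ring.
apply: (Rmult_le_reg_r (F0 * F1)); first nra.
apply: Rle_trans (_ : INR n ^ k.+1 * (M * M) <= _).
  have -> : a * b * (F0 * F1) = (a * F1) * (b * F0) by ring.
  by apply: Rmult_le_compat => //; apply: Rmult_le_pos; lra.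
have ME' : M <= E * F1 by nra.
have : M * M <= (E * F0) * (E * F1) by apply: Rmult_le_compat.
have := pow_le (INR n) k.+1 (pos_INR n); nra.
Qed.

Lemma pow_exp_absorb N m : 0 < N -> ln N <= INR m ->
  N * exp (-3) ^ m <= exp (-1) ^ m / N.
Proof.
move=> N0 lnN.
have Nm : N <= exp (INR m) by rewrite -[X in X <= _]exp_ln //; apply: exp_le_exp.
have -> : exp (-1) ^ m = exp (-3) ^ m * exp (INR m) ^ 2.
  by rewrite !exp_pow -exp_plus [INR 2]/=; congr exp; ring.
have e3 : 0 < exp (-3) ^ m by apply/pow_lt/exp_pos.
apply: (Rmult_le_reg_r N) => //.
rewrite (_ : exp (-3) ^ m * exp (INR m) ^ 2 / N * N = exp (-3) ^ m * exp (INR m) ^ 2);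
  last by field; lra.
have := Rmult_le_compat _ _ _ _ (Rlt_le _ _ N0) (Rlt_le _ _ N0) Nm Nm; nra.
Qed.

Lemma INR_sum (T : finType) (P : pred T) (f : T -> nat) :
  INR (\sum_(i | P i) f i) = \big[Rplus/0]_(i | P i) INR (f i).
Proof. by apply: (big_morph INR) => // a b; apply: plus_INR. Qed.

Lemma le_sum_term (T : finType) (P : pred T) (f : T -> R) i x :
  P i -> (forall j, P j -> 0 <= f j) -> x <= f i -> x <= \big[Rplus/0]_(j | P j) f j.
Proof.
move=> Pi f0 xf; rewrite (bigD1 i) //= -[x]Rplus_0_r; apply: Rplus_le_compat => //.
by apply/RleP/sumr_ge0 => j /andP [Pj _]; apply/RleP/f0.
Qed.

Lemma sum_const_card (T : finType) (P : pred T) x :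
  \big[Rplus/0]_(i | P i) x = INR #|[set i | P i]| * x.
Proof.
by rewrite -sum1dep_card INR_sum big_distrl; apply: eq_bigr => i _ /=; rewrite Rmult_1_l.
Qed.

Lemma sum_geom_le x N : 0 <= x < 1 -> \big[Rplus/0]_(j < N) x ^ j <= / (1 - x).
Proof.
move=> x01.
have geom : \big[Rplus/0]_(j < N) x ^ j * (1 - x) = 1 - x ^ N.
  elim: N => [|N IH]; first by rewrite big_ord0 /=; ring.
  by rewrite big_ord_recr /= Rmult_plus_distr_r IH; ring.
apply: (Rmult_le_reg_r (1 - x)); first lra.
by rewrite geom Rinv_l; [have := pow_le x N | ]; lra.
Qed.

Lemma sum_subsets_prod (T : finType) (U : {set T}) (a b : T -> R) :
  \big[Rplus/0]_(E : {set T} | E \subset U)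
     (\big[Rmult/1]_(e in E) a e * \big[Rmult/1]_(e in U :\: E) b e)
  = \big[Rmult/1]_(e in U) (a e + b e).
Proof.
pose a' i := if i \in U then a i else 0.
pose b' i := if i \in U then b i else 1.
have -> : \big[Rmult/1]_(e in U) (a e + b e) = \big[Rmult/1]_i (a' i + b' i).
  rewrite big_mkcond /=; apply: eq_bigr => i _.
  by rewrite /a' /b'; case: (i \in U); rewrite ?Rplus_0_l.
rewrite (bigA_distr 1 Rplus a' b') big_mkcond /=; apply: eq_bigr => J _.
case: ifP => JU.
  rewrite [RHS](bigID (mem J)) /=; congr (_ * _).
    by apply: eq_big => // i iJ; rewrite iJ /a' (subsetP JU _ iJ).
  by rewrite big_mkcond [RHS]big_mkcond; apply: eq_bigr => i _; rewrite inE; case: (i \in J).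
have [i iJ iU] := subsetPn (negbT JU).
by rewrite (bigD1 i) //= iJ /a' (negbTE iU) Rmult_0_l.
Qed.

Lemma sum_set_by_card n (P : pred nat) (G : nat -> R) :
  \big[Rplus/0]_(B : {set 'I_n} | P #|B|) G #|B| =
  \big[Rplus/0]_(j < n.+1 | P j) (INR 'C(n, j) * G j).
Proof.
rewrite (partition_big (fun B : {set 'I_n} => inord #|B| : 'I_n.+1) predT) //=.
rewrite [RHS]big_mkcond; apply: eq_bigr => j _ /=.
have cardB (B : {set 'I_n}) : (inord #|B| == j :> 'I_n.+1) = (#|B| == j).
  have ltB : (#|B| < n.+1)%N by rewrite ltnS -[X in (_ <= X)%N]card_ord max_card.
  by rewrite -val_eqE /= inordK.
under eq_bigl => B do rewrite cardB.
case: ifP => Pj; last by rewrite big_pred0 // => B; case: eqP => [-> | _]; rewrite ?Pj ?andbF.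
rewrite (eq_bigr (fun _ => G j)) => [|B /andP [_ /eqP -> //]].
rewrite (eq_bigl (fun B : {set 'I_n} => #|B| == j)); last first.
  by move=> B; case: eqP => [-> | _]; rewrite ?Pj ?andbF.
by rewrite sum_const_card card_draws card_ord.
Qed.

(** * Expectations in [G(n, p)] *)

Definition gnp_expect n p (X : graph n -> R) :=
  \big[Rplus/0]_(E : graph n | E \subset upairs n) (gnp_weight p E * X E).

Section Gnp.
Variables (n : nat) (p : R).
Hypothesis p01 : 0 <= p <= 1.

Lemma gnp_weightE (E : graph n) : E \subset upairs n ->
  gnp_weight p E = \big[Rmult/1]_(e in E) p * \big[Rmult/1]_(e in upairs n :\: E) (1 - p).
Proof. by move=> EU; rewrite /gnp_weight !prodr_const -!RpowE cardsD (setIidPr EU). Qed.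

Lemma gnp_weight_ge0 (E : graph n) : 0 <= gnp_weight p E.
Proof. by apply: Rmult_le_pos; apply: pow_le; lra. Qed.

Lemma gnp_expect1 : gnp_expect p (fun _ : graph n => 1) = 1.
Proof.
rewrite /gnp_expect (eq_bigr (fun E : graph n => \big[Rmult/1]_(e in E) p *
                                  \big[Rmult/1]_(e in upairs n :\: E) (1 - p))).
  by rewrite sum_subsets_prod (eq_bigr (fun _ => 1)) ?prodr_const ?expr1n // => e _; ring.
by move=> E EU; rewrite Rmult_1_r gnp_weightE.
Qed.

Lemma gnp_prob_markov (A : graph n -> Prop) (X : graph n -> R) :
  (forall E, 0 <= X E) -> (forall E : graph n, E \subset upairs n -> ~ A E -> 1 <= X E) ->
  1 - gnp_expect p X <= gnp_prob p A.
Proof.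
move=> X0 X1; rewrite -{1}gnp_expect1 /gnp_expect /gnp_prob RminusE -sumrB.
apply/RleP/ler_sum => E EU; apply/RleP.
have wE := gnp_weight_ge0 E; have XE := X0 E.
case: excluded_middle_informative => [AE | notA]; rewrite -RoppE -RplusE /=; first nra.
by have := X1 E EU notA; nra.
Qed.

End Gnp.

Lemma card_upairs_touching n (B : {set 'I_n}) :
  (#|[set e in upairs n | ends_in B e != 0%N]| <= #|B| * n)%N.
Proof.
pose flip (e : 'I_n * 'I_n) := if e.1 \in B then e else (e.2, e.1).
have flip_inj : {in [set e in upairs n | ends_in B e != 0%N] &, injective flip}.
  move=> [a b] [a' b']; rewrite !inE /ends_in /flip /= => /andP [ab _] /andP [ab' _].
  case: (a \in B); case: (a' \in B) => // -[e1 e2]; rewrite ?e1 ?e2 // in ab ab' *;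
    by have := ltn_trans ab ab'; rewrite ltnn.
have -> : (#|B| * n)%N = #|setX B [set: 'I_n]| by rewrite cardsX cardsT card_ord.
rewrite -(card_in_imset flip_inj).
apply: subset_leq_card; apply/subsetP=> f /imsetP [[a b]].
rewrite !inE /ends_in /flip /= => /andP [_ touch] ->.
by case aB: (a \in B); rewrite /= ?aB //; move: touch; rewrite aB; case: (b \in B).
Qed.

Lemma card_induced_upairs n (B : {set 'I_n}) :
  (#|induced_edges (upairs n) B| <= #|B| * #|B|)%N.
Proof.
rewrite -cardsX; apply: subset_leq_card; apply/subsetP=> e.
by rewrite !inE => /andP [_ /andP [-> ->]].
Qed.

Section DegreeMoment.
Variables (n : nat) (p t : R) (B : {set 'I_n}) (F : graph n).
Hypotheses (p01 : 0 <= p <= 1) (t1 : 1 <= t).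
Hypothesis FB : F \subset induced_edges (upairs n) B.

Let FU : F \subset upairs n.
Proof. exact: subset_trans FB (induced_edges_sub _ _). Qed.

Definition deg_moment (E : graph n) :=
  if F \subset E then t ^ (\sum_(v in B) deg E v) else 0.

Lemma gnp_expect_deg_momentE : gnp_expect p deg_moment =
  \big[Rmult/1]_(e in upairs n) (p * t ^ ends_in B e + (if e \in F then 0 else 1 - p)).
Proof.
rewrite -sum_subsets_prod; apply: eq_bigr => E EU.
rewrite gnp_weightE // /deg_moment; case: ifP => FE.
  have -> : \big[Rmult/1]_(e in upairs n :\: E) (if e \in F then 0 else 1 - p)
            = \big[Rmult/1]_(e in upairs n :\: E) (1 - p).
    apply: eq_bigr => e; rewrite inE => /andP [eE _].
    by case: ifP => // eF; move: eE; rewrite (subsetP FE _ eF).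
  rewrite sum_deg //.
  have -> : t ^ (\sum_(e in E) ends_in B e) = \big[Rmult/1]_(e in E) t ^ ends_in B e.
    by apply: (big_morph (pow t)) => // a b; apply: pow_add.
  by rewrite big_split /=; ring.
have [e eF eE] := subsetPn (negbT FE).
rewrite [X in _ = _ * X](bigD1 e) /=; last by rewrite inE eE (subsetP FU).
by rewrite eF; ring.
Qed.

Lemma gnp_expect_deg_moment : gnp_expect p deg_moment <=
  (p * t ^ 2) ^ #|F| * (1 + p * (t ^ 2 - 1)) ^ (#|B| * n).
Proof.
set X := 1 + p * (t ^ 2 - 1).
have t2 : 1 <= t ^ 2 by nra.
have X1 : 1 <= X by rewrite /X; nra.
pose g (e : 'I_n * 'I_n) := if ends_in B e != 0%N then X else 1.
have g1 e : 1 <= g e by rewrite /g; case: ifP; lra.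
rewrite gnp_expect_deg_momentE (bigID (mem F)) /=.
have -> : \big[Rmult/1]_(e in upairs n | e \in F)
    (p * t ^ ends_in B e + (if e \in F then 0 else 1 - p)) = (p * t ^ 2) ^ #|F|.
  rewrite RpowE -prodr_const; apply: eq_big => [e | e /andP [_ eF]].
    by rewrite andb_idl // => /(subsetP FU).
  have := subsetP FB _ eF; rewrite inE eF => /andP [_ /andP [e1 e2]].
  by rewrite /ends_in e1 e2 Rplus_0_r.
apply: Rmult_le_compat_l.
  by apply: pow_le; apply: Rmult_le_pos; [lra | apply: pow_le; lra].
apply: Rle_trans (_ : \big[Rmult/1]_(e in upairs n | e \notin F) g e <= _).
  apply/RleP/ler_prod => e /andP [_ eF]; apply/andP; split; apply/RleP.
    rewrite (negbTE eF); apply: Rplus_le_le_0_compat; last lra.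
    by apply: Rmult_le_pos; [lra | apply: pow_le; lra].
  rewrite (negbTE eF) /g /ends_in; case: ifP => [_ | /negbFE/eqP ->]; last by rewrite /=; lra.
  have : t ^ ((e.1 \in B) + (e.2 \in B)) <= t ^ 2.
    by apply: Rle_pow => //; apply/leP; case: (e.1 \in B); case: (e.2 \in B).
  by rewrite /X; nra.
apply: Rle_trans (_ : \big[Rmult/1]_(e in upairs n) g e <= _).
  rewrite [X in _ <= X](bigID (mem F)) /= -[X in X <= _]Rmult_1_l.
  apply: Rmult_le_compat_r.
    by apply/RleP/prodr_ge0 => e _; apply/RleP/(Rle_trans _ _ _ Rle_0_1 (g1 e)).
  by apply: (big_ind (fun x => 1 <= x)) => //; [lra | move=> x y; nra].
rewrite big_mkcond (eq_bigr (fun e =>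
    if e \in [set e in upairs n | ends_in B e != 0%N] then X else 1)).
  rewrite -big_mkcond prodr_const -RpowE.
  by apply: Rle_pow => //; apply/leP/card_upairs_touching.
by move=> e _; rewrite inE /g; case: (e \in upairs n).
Qed.

End DegreeMoment.

(** * Weighted witnesses *)

Lemma sum_deg_ge_high n q beta (E : graph n) (B : {set 'I_n}) :
  0 <= deg_threshold q beta ->
  deg_threshold q beta * INR #|[set v in B | high_degree q beta E v]|
  <= INR (\sum_(v in B) deg E v).
Proof.
move=> thr0; rewrite -sum1dep_card !INR_sum big_distrr /=.
rewrite [X in _ <= X](bigID (high_degree q beta E)) /= -[X in X <= _]Rplus_0_r.
apply: Rplus_le_compat.
  by apply/RleP/ler_sum => v /andP [_ /RlebP hv]; apply/RleP; rewrite Rmult_1_r.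
by apply/RleP/sumr_ge0 => v _; apply/RleP/pos_INR.
Qed.

(* A block that is large compared to its path is mostly made of high-degree
   vertices, so its degree sum is linear in its size. *)
Lemma block_deg_sum_ge n q beta (E : graph n) (B : {set 'I_n}) (l : nat) C a :
  1 <= C -> 0 <= deg_threshold q beta -> a * C <= deg_threshold q beta * (C - 1) ->
  C * (INR l + 1) < INR #|B| ->
  (#|B| <= l.+1 + #|[set v in B | high_degree q beta E v]|)%N ->
  a * INR #|B| <= INR (\sum_(v in B) deg E v).
Proof.
move=> C1 thr0 aC ltB leB; have := sum_deg_ge_high E B thr0.
set m := INR #|B| in ltB *; set h := INR #|[set v in B | _]|.
set thr := deg_threshold q beta; set S := INR _ => thrS.
have mlh : m <= INR l + 1 + h by rewrite /m -S_INR -plus_INR; apply/le_INR/leP.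
have hm : (C - 1) * m <= C * h by nra.
have m0 : 0 <= m by apply: pos_INR.
apply: (Rmult_le_reg_l C); first lra.
have : thr * ((C - 1) * m) <= thr * (C * h) by apply: Rmult_le_compat_l.
have : a * C * m <= thr * (C - 1) * m by apply: Rmult_le_compat_r.
nra.
Qed.

(* Candidate witnesses [(B, F)]: [B] is too large and [F] is any set of
   [#|B| - 1] pairs inside [B]; each is weighted by its degree moment relative
   to [z ^ #|B|], so that some term is at least 1 on a bad graph. *)
Definition witness_weight n C t z (E : graph n) :=
  \big[Rplus/0]_(B : {set 'I_n} | Rltb (C * ln (INR n)) (INR #|B|))
   \big[Rplus/0]_(F : graph n | (F \subset induced_edges (upairs n) B)
                                && (#|F| == #|B| - 1)%N)
     (deg_moment t B F E / z ^ #|B|).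

Section WitnessWeight.
Variables (n : nat) (C t z : R).
Hypotheses (t1 : 1 <= t) (z0 : 0 < z).

Let term_ge0 (B : {set 'I_n}) (F : graph n) E : 0 <= deg_moment t B F E / z ^ #|B|.
Proof.
apply: Rmult_le_pos; last by apply/Rlt_le/Rinv_0_lt_compat/pow_lt.
by rewrite /deg_moment; case: ifP => _; [apply: pow_le; lra | apply: Rle_refl].
Qed.

Lemma witness_weight_ge0 (E : graph n) : 0 <= witness_weight C t z E.
Proof.
rewrite /witness_weight; apply/RleP/sumr_ge0 => B _.
by apply/sumr_ge0 => F _; apply/RleP/term_ge0.
Qed.

Lemma witness_weight_ge1 q beta (E : graph n) :
  E \subset upairs n -> ~ good_event q beta C E -> 0 <= C ->
  (forall (B : {set 'I_n}) (l : nat),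
     C * (INR l + ln (INR n)) < INR #|B| ->
     (#|B| <= l.+1 + #|[set v in B | high_degree q beta E v]|)%N ->
     z ^ #|B| <= t ^ (\sum_(v in B) deg E v)) ->
  1 <= witness_weight C t z E.
Proof.
move=> EU bad C0 zdeg.
have [B [F [l [FB cardF ltB leB]]]] := bad_event_witness bad.
have bigB : Rltb (C * ln (INR n)) (INR #|B|).
  by apply/RltbP/(Rle_lt_trans _ _ _ _ ltB); have := pos_INR l; nra.
rewrite /witness_weight; apply: (le_sum_term (i := B)) => [// | B' _ | ].
  by apply/RleP/sumr_ge0 => F' _; apply/RleP/term_ge0.
have FBU : (F \subset induced_edges (upairs n) B) && (#|F| == #|B| - 1)%N.
  rewrite cardF eqxx andbT; apply: subset_trans FB _.
  by apply/subsetP=> e; rewrite inE => /andP [/(subsetP EU) eU eB]; rewrite inE eU.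
apply: (le_sum_term (i := F)) => [// | F' _ | ]; first exact: term_ge0.
rewrite /deg_moment (subset_trans FB (induced_edges_sub _ _)).
apply: (Rmult_le_reg_r (z ^ #|B|)); first exact: pow_lt.
rewrite Rmult_assoc Rinv_l ?Rmult_1_l ?Rmult_1_r; [exact: zdeg ltB leB | ].
by apply/pow_nonzero/Rgt_not_eq.
Qed.

Definition block_term p m :=
  INR 'C(m * m, m - 1) *
  ((p * t ^ 2) ^ (m - 1) * (1 + p * (t ^ 2 - 1)) ^ (m * n)) / z ^ m.

Lemma gnp_expect_witness_weight p : 0 <= p <= 1 ->
  gnp_expect p (@witness_weight n C t z) <=
  \big[Rplus/0]_(B : {set 'I_n} | Rltb (C * ln (INR n)) (INR #|B|)) block_term p #|B|.
Proof.
move=> p01.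
have -> : gnp_expect p (@witness_weight n C t z) =
    \big[Rplus/0]_(B : {set 'I_n} | Rltb (C * ln (INR n)) (INR #|B|))
     \big[Rplus/0]_(F : graph n | (F \subset induced_edges (upairs n) B)
                                  && (#|F| == #|B| - 1)%N)
       (gnp_expect p (deg_moment t B F) / z ^ #|B|).
  rewrite /gnp_expect /witness_weight.
  under eq_bigr => E _ do (rewrite big_distrr; under eq_bigr => B _ do rewrite big_distrr).
  rewrite exchange_big; apply: eq_bigr => B _; rewrite exchange_big; apply: eq_bigr => F _.
  by rewrite /Rdiv big_distrl; apply: eq_bigr => E _ /=; ring.
apply/RleP/ler_sum => B _; apply/RleP.
apply: Rle_trans (_ : \big[Rplus/0]_(F : graph n | (F \subset induced_edges (upairs n) B)
                                  && (#|F| == #|B| - 1)%N)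
       ((p * t ^ 2) ^ (#|B| - 1) * (1 + p * (t ^ 2 - 1)) ^ (#|B| * n) / z ^ #|B|) <= _).
  apply/RleP/ler_sum => F /andP [FB /eqP cardF]; apply/RleP.
  apply: Rmult_le_compat_r; first by apply/Rlt_le/Rinv_0_lt_compat/pow_lt.
  by rewrite -cardF; apply: gnp_expect_deg_moment.
rewrite sum_const_card cards_draws /block_term /Rdiv -!Rmult_assoc.
have t2 : 1 <= t ^ 2 by nra.
apply: Rmult_le_compat_r; first by apply/Rlt_le/Rinv_0_lt_compat/pow_lt.
apply: Rmult_le_compat_r; first by apply: pow_le; nra.
apply: Rmult_le_compat_r; first by apply: pow_le; nra.
exact/le_INR/leP/leq_bin2l/card_induced_upairs.
Qed.

End WitnessWeight.

(** * Summing over the sizes of witnesses *)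

(* The factor by which each vertex of a witness multiplies its expected
   weight: [e^2] from choosing the vertex and its edge, [d t^2] from that edge
   being present, and [exp (- (A ln t - (t^2 - 1)) d)] from its degree moment
   against the threshold [t ^ (A d)]. *)
Definition decay_rate d t A :=
  exp 2 * (d * t ^ 2) * exp (- ((A * ln t - (t ^ 2 - 1)) * d)).

Lemma decay_rate_pow N d t A k : 0 < N -> 0 < d -> 0 < t ->
  (N * exp 2) ^ k.+1 * ((d * t ^ 2) ^ k / N ^ k)
    * exp (- ((A * ln t - (t ^ 2 - 1)) * d)) ^ k.+1
  = N * decay_rate d t A ^ k.+1 / (d * t ^ 2).
Proof.
move=> N0 d0 t0; rewrite /decay_rate !Rpow_mult_distr /=; field.
by split; [lra | split; [lra | apply: pow_nonzero; lra]].
Qed.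

Lemma edge_factor_le n d t A m : 0 < INR n -> 0 <= d -> 1 <= t ->
  (1 + d / INR n * (t ^ 2 - 1)) ^ (m * n) / exp (A * d * ln t) ^ m
  <= exp (- ((A * ln t - (t ^ 2 - 1)) * d)) ^ m.
Proof.
move=> N0 d0 t1; rewrite /Rdiv !exp_pow -exp_Ropp.
apply: Rle_trans (_ : exp (INR (m * n) * (d * / INR n * (t ^ 2 - 1)))
                      * exp (- (INR m * (A * d * ln t))) <= _).
  apply: Rmult_le_compat_r; first exact/Rlt_le/exp_pos.
  have p0 : 0 <= d * / INR n by apply: Rmult_le_pos => //; apply/Rlt_le/Rinv_0_lt_compat.
  have t2 : 1 <= t ^ 2 by nra.
  by apply: pow_le_exp; nra.
by rewrite -exp_plus mult_INR; right; congr exp; field; lra.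
Qed.

Lemma block_term_le n d t A k :
  (1 <= n)%N -> 1 <= d -> 1 <= t -> ln (INR n) <= INR k.+1 ->
  decay_rate d t A <= exp (-3) ->
  INR 'C(n, k.+1) * block_term n t (exp (A * d * ln t)) (d / INR n) k.+1
  <= exp (-1) ^ k.+1 / INR n.
Proof.
move=> n1 d1 t1 lnk rate; rewrite /block_term subn1 /=.
set N := INR n; set W := exp (- ((A * ln t - (t ^ 2 - 1)) * d)).
have N0 : 0 < N by apply/lt_0_INR/ltP.
have [t2 dt1] : 1 <= t ^ 2 /\ 1 <= d * t ^ 2 by split; nra.
have p0 : 0 <= d / N by apply: Rmult_le_pos; [lra | apply/Rlt_le/Rinv_0_lt_compat].
have edges := @edge_factor_le n d t A k.+1 N0 (Rle_trans _ _ _ Rle_0_1 d1) t1.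
set Q := _ / exp (A * d * ln t) ^ k.+1 in edges; rewrite -/N -/W in edges.
have Q0 : 0 <= Q.
  apply: Rmult_le_pos; first by apply: pow_le; rewrite -/N; nra.
  by apply/Rlt_le/Rinv_0_lt_compat/pow_lt/exp_pos.
have dens : (d / N * t ^ 2) ^ k = (d * t ^ 2) ^ k / N ^ k.
  by rewrite /Rdiv !Rpow_mult_distr pow_inv; field; apply: pow_nonzero; lra.
apply: Rle_trans (_ : (N * exp 2) ^ k.+1 * ((d * t ^ 2) ^ k / N ^ k) * W ^ k.+1 <= _).
  have regroup x y u v : x * (y * (u * v) / exp (A * d * ln t) ^ k.+1)
                         = x * y * u * (v / exp (A * d * ln t) ^ k.+1).
    by rewrite /Rdiv; ring.
  rewrite -dens regroup -/Q.
  have pk0 : 0 <= (d / N * t ^ 2) ^ k by apply/pow_le/Rmult_le_pos; lra.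
  apply: Rmult_le_compat => //; last first.
    by apply: Rmult_le_compat_r => //; rewrite -/N; apply: binomial_pair_le.
  by apply: Rmult_le_pos => //; apply: Rmult_le_pos; apply: pos_INR.
apply: Rle_trans (_ : N * exp (-3) ^ k.+1 <= _); last exact: pow_exp_absorb.
rewrite /W decay_rate_pow; [ | lra..].
have r0 : 0 <= decay_rate d t A.
  apply: Rmult_le_pos; last exact/Rlt_le/exp_pos.
  by apply: Rmult_le_pos; [apply/Rlt_le/exp_pos | lra].
have rk : 0 <= decay_rate d t A ^ k.+1 <= exp (-3) ^ k.+1.
  by split; [apply: pow_le | apply: pow_incr].
have inv_dt : 0 < / (d * t ^ 2) <= 1.
  by split; [apply: Rinv_0_lt_compat | rewrite -Rinv_1; apply: Rinv_le_contravar]; lra.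
by rewrite /Rdiv Rmult_assoc; apply: Rmult_le_compat_l; nra.
Qed.

Lemma sum_block_terms_le n C d t A :
  (3 <= n)%N -> 1 <= C -> 1 <= d -> 1 <= t -> decay_rate d t A <= exp (-3) ->
  \big[Rplus/0]_(B : {set 'I_n} | Rltb (C * ln (INR n)) (INR #|B|))
     block_term n t (exp (A * d * ln t)) (d / INR n) #|B| <= 2 / INR n.
Proof.
move=> n3 C1 d1 t1 rate.
have N0 : 0 < INR n by apply/lt_0_INR/ltP; apply: leq_trans n3.
have lnN := ln_ge1 n3.
rewrite (@sum_set_by_card n (fun m => Rltb (C * ln (INR n)) (INR m))).
apply: Rle_trans (_ : \big[Rplus/0]_(j < n.+1) (exp (-1) ^ j / INR n) <= _).
  rewrite big_mkcond; apply/RleP/ler_sum => j _; apply/RleP.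
  have e0 : 0 <= exp (-1) ^ j / INR n.
    by apply: Rmult_le_pos; [apply/pow_le/Rlt_le/exp_pos | apply/Rlt_le/Rinv_0_lt_compat].
  case: ifP => [/RltbP | _] //; case: (nat_of_ord j) => [|k] ltCk; first by move: ltCk => /=; nra.
  apply: block_term_le => //; first exact: leq_trans n3.
  by apply: Rle_trans (Rlt_le _ _ ltCk); nra.
rewrite /Rdiv -big_distrl; apply: Rmult_le_compat_r; first exact/Rlt_le/Rinv_0_lt_compat.
have e1 : exp (-1) <= / 2.
  have : exp (-1) * exp 1 = 1 by rewrite -exp_plus (_ : -1 + 1 = 0) ?exp_0 //; ring.
  by have := exp_ineq1_le 1; have := exp_pos (-1); nra.
apply: Rle_trans (sum_geom_le _ _) _; first by split; [apply/Rlt_le/exp_pos | lra].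
apply: (Rmult_le_reg_r (1 - exp (-1))); first lra.
by rewrite Rinv_l; lra.
Qed.

Theorem gnp_good_event_ge n q beta C d t A :
  (3 <= n)%N -> 1 <= C -> 1 <= d <= INR n -> 1 <= t ->
  0 <= deg_threshold q beta -> A * d * C <= deg_threshold q beta * (C - 1) ->
  decay_rate d t A <= exp (-3) ->
  1 - 2 / INR n <= gnp_prob (d / INR n) (@good_event n q beta C).
Proof.
move=> n3 C1 [d1 dn] t1 thr0 thrC rate.
have N0 : 0 < INR n by apply/lt_0_INR/ltP; apply: leq_trans n3.
have p01 : 0 <= d / INR n <= 1.
  split; first by apply: Rmult_le_pos; [lra | apply/Rlt_le/Rinv_0_lt_compat].
  by apply: (Rmult_le_reg_r (INR n)) => //; rewrite /Rdiv Rmult_assoc Rinv_l; lra.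
have z0 : 0 < exp (A * d * ln t) by apply: exp_pos.
apply: (Rle_trans _ (1 - gnp_expect (d / INR n) (witness_weight C t (exp (A * d * ln t))))).
  apply/Rplus_le_compat_l/Ropp_le_contravar.
  apply: Rle_trans (gnp_expect_witness_weight n C t1 z0 p01) _.
  exact: sum_block_terms_le.
apply: gnp_prob_markov => // [E | E EU bad]; first exact: witness_weight_ge0.
apply: (witness_weight_ge1 t1 z0 EU bad) => [| B l ltB leB]; first lra.
have t0 : 0 < t by lra.
have lnt : 0 <= ln t by have := ln_lower_bound t0; nra.
rewrite exp_pow -(Rpower_pow _ _ t0); apply: exp_le_exp.
rewrite -Rmult_assoc; apply: Rmult_le_compat_r => //.
rewrite Rmult_comm; apply: (block_deg_sum_ge C1 thr0 thrC _ leB).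
by apply: Rle_lt_trans ltB; have := ln_ge1 n3; nra.
Qed.

(** * Choice of the constants *)

Lemma deg_threshold_ge q beta d e :
  0 <= beta < 1 -> 0 < e -> 6 / e <= d -> (2 + e) * d <= INR q ->
  (2 + e / 2) * d <= deg_threshold q beta.
Proof.
move=> beta01 e0 de qd.
have ed : 3 <= e / 2 * d.
  have : e * (6 / e) <= e * d by apply: Rmult_le_compat_l; lra.
  by rewrite (_ : e * (6 / e) = 6); [lra | field; lra].
have q1 : 0 <= INR q - 1 by nra.
have : INR q - 1 <= (INR q - 1) / (1 - beta).
  apply: (Rmult_le_reg_r (1 - beta)); first lra.
  by rewrite /Rdiv Rmult_assoc Rinv_l; [nra | lra].
by rewrite /deg_threshold; lra.
Qed.

Lemma rate_exponent_pos e :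
  0 < e <= 1 -> 0 < (2 + e / 4) * ln (1 + e / 16) - ((1 + e / 16) ^ 2 - 1).
Proof.
move=> e01; set t := 1 + e / 16; set A := 2 + e / 4.
have t0 : 0 < t by rewrite /t; lra.
have : A * (t - 1) <= A * (t * ln t).
  by apply: Rmult_le_compat_l; [rewrite /A | apply: ln_lower_bound]; lra.
have : 0 < (t - 1) * (A - t * (t + 1)) by apply: Rmult_lt_0_compat; rewrite /t /A; nra.
move=> pos le; apply: (Rmult_lt_reg_r t) => //; nra.
Qed.

Lemma decay_rate_le d t A :
  let c := A * ln t - (t ^ 2 - 1) in
  0 < c -> t ^ 2 <= 2 -> 8 * exp 5 / (c * c) <= d -> decay_rate d t A <= exp (-3).
Proof.
move=> c c0 t2 dc; rewrite /decay_rate -/c.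
have cc0 : 0 < c * c by nra.
have e5 : 0 < exp 5 by apply: exp_pos.
have cd : 8 * exp 5 <= c * c * d.
  apply: (Rle_trans _ (c * c * (8 * exp 5 / (c * c)))); first by right; field; lra.
  by apply: Rmult_le_compat_l; lra.
have d0 : 0 <= d by nra.
set x := c * d / 2.
have x0 : 0 <= x by rewrite /x; nra.
have sq : x * x <= exp (c * d).
  rewrite (_ : c * d = x + x); last by rewrite /x; field.
  by rewrite exp_plus; have := exp_ineq1_le x; nra.
have big : exp 5 * (d * t ^ 2) <= x * x.
  rewrite (_ : x * x = c * c * d * (d / 4)); last by rewrite /x; field.
  have : exp 5 * (d * t ^ 2) <= exp 5 * (d * 2).
    by apply: Rmult_le_compat_l; [lra | apply: Rmult_le_compat_l].
  have : 8 * exp 5 * (d / 4) <= c * c * d * (d / 4) by apply: Rmult_le_compat_r; lra.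
  lra.
have key : exp 2 * (d * t ^ 2) <= exp (-3) * exp (c * d).
  rewrite (_ : exp 2 = exp (-3) * exp 5); last by rewrite -exp_plus; congr exp; ring.
  by have := exp_pos (-3); nra.
have inv : exp (c * d) * exp (- (c * d)) = 1 by rewrite -exp_plus Rplus_opp_r exp_0.
have := Rmult_le_compat_r _ _ _ (Rlt_le _ _ (exp_pos (- (c * d)))) key.
by rewrite [exp (-3) * _ * _]Rmult_assoc inv Rmult_1_r.
Qed.

Lemma block_constant_le e d thr : 0 < e <= 1 -> 0 <= d -> (2 + e / 2) * d <= thr ->
  (2 + e / 4) * d * (1 + 16 / e) <= thr * (1 + 16 / e - 1).
Proof.
move=> e01 d0 thrd; set s := 16 / e.
have es : e * s = 16 by rewrite /s; field; lra.
have s0 : 0 <= s by nra.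
have ks : (2 + e / 4) * (1 + s) <= (2 + e / 2) * s by nra.
have := Rmult_le_compat_r _ _ _ d0 ks.
have : (2 + e / 2) * d * s <= thr * s by apply: Rmult_le_compat_r.
rewrite (_ : 1 + s - 1 = s); [nra | ring].
Qed.

Lemma up_le_INR d n : 0 <= d -> (Z.to_nat (up d) <= n)%N -> d <= INR n.
Proof.
move=> d0 upn; have [ltd _] := archimed d.
apply: Rle_trans (le_INR _ _ (elimT leP upn)).
by rewrite INR_IZR_INZ Znat.Z2Nat.id; [lra | apply: le_IZR; lra].
Qed.

Theorem mainTheorem15 :
  forall eps : R, (0 < eps) ->
  exists d0 : R, forall (d : R) (q : nat) (beta : R),
    (d0 <= d) -> ((2 + eps) * d <= INR q) -> (0 <= beta < 1) ->
    exists C : R, (0 < C) /\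
    exists (K : R) (N0 : nat), forall n : nat, (N0 <= n)%N ->
      (1 - K / INR n <= gnp_prob (d / INR n) (@good_event n q beta C)).
Proof.
move=> eps eps0; pose e := Rmin eps 1.
have e01 : 0 < e <= 1 by split; [apply: Rmin_pos; lra | apply: Rmin_r].
have e_eps : e <= eps := Rmin_l eps 1.
pose t := 1 + e / 16; pose A := 2 + e / 4; pose c := A * ln t - (t ^ 2 - 1).
have c0 : 0 < c := rate_exponent_pos e01.
exists (Rmax (Rmax (6 / e) 1) (8 * exp 5 / (c * c))) => d q beta d0d qd beta01.
have [d6 d1 dc] : [/\ 6 / e <= d, 1 <= d & 8 * exp 5 / (c * c) <= d].
  have := Rmax_l (Rmax (6 / e) 1) (8 * exp 5 / (c * c)).
  have := Rmax_r (Rmax (6 / e) 1) (8 * exp 5 / (c * c)).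
  have := Rmax_l (6 / e) 1; have := Rmax_r (6 / e) 1; split; lra.
have s0 : 0 < 16 / e by apply: Rdiv_lt_0_compat; lra.
exists (1 + 16 / e); split; first lra.
exists 2, (maxn 3 (Z.to_nat (up d))) => n /[!geq_max] /andP [n3 upn].
have thrd : (2 + e / 2) * d <= deg_threshold q beta.
  apply: deg_threshold_ge => //; first lra.
  by apply: Rle_trans qd; apply: Rmult_le_compat_r; lra.
apply: (gnp_good_event_ge (t := t) (A := A)) => //.
- lra.
- by split=> //; apply: up_le_INR => //; lra.
- by rewrite /t; lra.
- by apply: Rle_trans thrd; nra.
- by apply: block_constant_le => //; lra.
- by apply: decay_rate_le => //; rewrite /t; nra.
Qed.
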